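(* Let $p$ be an odd prime and $q\in\mathbb C_p$ with $|1-q|_p<p^{-1/(p-1)}$. For $n\in\mathbb Z_+$ and $x\in\mathbb Z_p$, $$E_{n,q}(x)=2\sum_{l=0}^n\sum_{k=l}^n\sum_{\substack{l_0+\cdots+l_k=n-k\\ l_0,\dots,l_k\in\mathbb Z_+}}q^{\sum_{i=0}^k il_i}\frac{1}{(1-q)^{n+l-k}}s_{1,q}(k,l)(-1)^k\frac{q^{lx}}{1+q^l}.$$
   Context: $[x]_q=\frac{1-q^x}{1-q}$. The fermionic $p$-adic integral of a uniformly differentiable $f:\mathbb Z_p\to\mathbb C_p$ is $\int_{\mathbb Z_p}f(y)\,d\mu_{-1}(y)=\lim_{N\to\infty}\sum_{y=0}^{p^N-1}f(y)(-1)^y$. The $q$-Euler polynomials are $E_{n,q}(x)=\int_{\mathbb Z_p}[x+y]_q^n\,d\mu_{-1}(y)$. The $q$-Stirling numbers of the first kind $s_{1,q}(k,l)$ are defined by $[x]_q[x-1]_q\cdots[x-k+1]_q=q^{-\binom k2}\sum_{l=0}^k s_{1,q}(k,l)[x]_q^l$, as an identity of polynomials in $[x]_q$ (using $[x-i]_q=q^{-i}([x]_q-[i]_q)$). *)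

From HB Require Import structures.
From mathcomp Require Import all_boot all_order all_algebra.
From mathcomp Require Import reals exp.
From Stdlib Require Import ClassicalEpsilon.
Set Implicit Arguments. Unset Strict Implicit. Unset Printing Implicit Defensive.
Import Order.TTheory GRing.Theory Num.Theory.

(* x : padic_int p is the sequence (x mod p^N)_N, with x_{N+1} mod p^N = x_N.    *)
Record padic_int (p : nat) := MkZp {
  zdig :> nat -> nat;
  zdigP : forall N, (zdig N.+1 %% p ^ N = zdig N)%N }.

Lemma nat_to_Zp_proof (p y : nat) (N : nat) :
  ((y %% p ^ N.+1) %% p ^ N = y %% p ^ N)%N.
Proof. by rewrite modn_dvdm // dvdn_exp2l. Qed.

Definition nat_to_Zp (p : nat) (y : nat) : padic_int p :=
  @MkZp p (fun N => (y %% p ^ N)%N) (nat_to_Zp_proof p y).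

Lemma zp_add_proof (p : nat) (x y : padic_int p) (N : nat) :
  (((x N.+1 + y N.+1) %% p ^ N.+1) %% p ^ N = (x N + y N) %% p ^ N)%N.
Proof.
rewrite modn_dvdm ?dvdn_exp2l // -(zdigP x N) -(zdigP y N).
by rewrite modnDm.
Qed.

Definition zp_add (p : nat) (x y : padic_int p) : padic_int p :=
  @MkZp p (fun N => ((x N + y N) %% p ^ N)%N) (zp_add_proof x y).

Local Open Scope ring_scope.

Section Valued.
Variables (R : realType) (K : fieldType) (abs : K -> R).

Definition cvg_to (u : nat -> K) (L : K) : Prop :=
  forall e : R, 0 < e -> exists N, forall m, (N <= m)%N -> abs (u m - L) < e.

Definition cauchy (u : nat -> K) : Prop :=
  forall e : R, 0 < e -> exists N, forall m k, (N <= m)%N -> (N <= k)%N ->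
    abs (u m - u k) < e.

Record padic_abs (p : nat) : Prop := {
  abs_ge0 : forall x, 0 <= abs x;
  abs_eq0 : forall x, abs x = 0 -> x = 0;
  abs_0 : abs 0 = 0;
  abs_mul : forall x y, abs (x * y) = abs x * abs y;
  abs_ultra : forall x y, abs (x + y) <= Num.max (abs x) (abs y);
  abs_p : abs p%:R = (p%:R)^-1;
  abs_complete : forall u, cauchy u -> exists L, cvg_to u L }.

Definition qpowZp (p : nat) (q : K) (x : padic_int p) : K :=
  epsilon (inhabits 0) (fun L => cvg_to (fun N => q ^+ x N) L).

Definition qint_Zp (p : nat) (q : K) (x : padic_int p) : K := (1 - qpowZp q x) / (1 - q).
Definition qint_nat (q : K) (i : nat) : K := (1 - q ^+ i) / (1 - q).

Definition fermionic_integral (p : nat) (f : padic_int p -> K) : K :=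
  epsilon (inhabits 0) (fun L =>
    cvg_to (fun N => \sum_(y < p ^ N) f (nat_to_Zp p y) * (-1) ^+ y) L).

Definition Enq (p : nat) (q : K) (n : nat) (x : padic_int p) : K :=
  fermionic_integral (fun y => qint_Zp q (zp_add x y) ^+ n).

End Valued.

(* q-Stirling numbers of the first kind:  [x]_q[x-1]_q...[x-k+1]_q
   = q^{-C(k,2)} sum_l s_{1,q}(k,l) [x]_q^l, where [x-i]_q = q^{-i}([x]_q-[i]_q);
   i.e. s_{1,q}(k,l) is the l-th coefficient of
   q^{C(k,2)} prod_{i<k} q^{-i} (X - [i]_q). *)
Definition s1q (K : fieldType) (q : K) (k l : nat) : K :=
  (q ^+ 'C(k, 2) *: \prod_(i < k) (q ^- i *: ('X - (qint_nat q i)%:P))) `_ l.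

From HB Require Import structures.
From mathcomp Require Import all_boot all_order all_algebra.
From mathcomp Require Import reals exp.
From mathcomp Require Import ring zify.
From Stdlib Require Import ClassicalEpsilon.
Set Implicit Arguments. Unset Strict Implicit. Unset Printing Implicit Defensive.
Import Order.TTheory GRing.Theory Num.Theory.
Local Open Scope ring_scope.

(* Write Q = q^x. Since [x + y]_q = (1 - Q q^y) / (1 - q), the binomial theorem
   turns [x + y]_q^n into a combination of the characters y |-> q^(jy), whose
   fermionic integral is 2 / (1 + q^j): the hypothesis on |1 - q| makes
   q^(p^N) tend to 1, so the alternating partial sums over y < p^N converge.
   This gives E_{n,q}(x) = (1 - q)^-n sum_j C(n, j) (-Q)^j 2 / (1 + q^j).
   Expanding instead the power Z^n of Z = q^x = 1 - (1 - q) [x]_q in the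
   Newton basis prod_{i<k} (Z - q^i) = (q - 1)^k q^C(k,2) [x]_q...[x-k+1]_q
   has complete homogeneous coefficients h_{n-k}(1, q, ..., q^k), which are
   the sums over compositions l_0 + ... + l_k = n - k; comparing the
   coefficients of [x]_q^l of both expansions gives the theorem. *)

Lemma sumr_nat_dropl (V : nmodType) (F : nat -> V) m n :
  (forall k, (k < m)%N -> F k = 0) -> \sum_(m <= k < n) F k = \sum_(k < n) F k.
Proof.
move=> F0; rewrite big_geq_mkord big_mkcondr; apply: eq_bigr => k _.
by case: leqP => // /F0 ->.
Qed.

Lemma alternating_geom_sum (K : comNzRingType) (a : K) M : odd M ->
  (1 + a) * \sum_(y < M) (- a) ^+ y = 1 + a ^+ M.
Proof.
move=> oddM; have := subrX1 (- a) M.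
have -> : (- a) ^+ M = - a ^+ M by rewrite exprNn -signr_odd oddM expr1 mulN1r.
set S := \sum_(y < M) _ => h.
have -> : (1 + a) * S = - ((- a - 1) * S) by ring.
by rewrite -h; ring.
Qed.

Section CompleteHomogeneous.
Variables (R : comNzRingType) (x : nat -> R).

Definition trunc_geom (N : nat) (a : R) : {poly R} := \sum_(j < N.+1) a ^+ j *: 'X^j.

(* The complete homogeneous symmetric polynomial h_m(x_0, ..., x_k); the
   truncation order N only has to satisfy m <= N (see hcomplete_trunc). *)
Definition hcomplete (N m k : nat) : R := (\prod_(i < k.+1) trunc_geom N (x i))`_m.

Definition newton_basis (Z : {poly R}) (k : nat) : {poly R} :=
  \prod_(i < k) (Z - (x i)%:P).

Lemma coef_trunc_geom N a j : (j <= N)%N -> (trunc_geom N a)`_j = a ^+ j.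
Proof.
move=> hj; rewrite /trunc_geom coef_sum (bigD1 (Ordinal (hj : (j < N.+1)%N))) //=.
rewrite coefZ coefXn eqxx mulr1 big1 ?addr0 // => i /negbTE hi.
rewrite coefZ coefXn (_ : (j == i) = false) ?mulr0 //.
by apply: contraFF hi => /eqP hji; apply/eqP/val_inj.
Qed.

Lemma hcomplete0 N k : hcomplete N 0 k = 1.
Proof. by rewrite /hcomplete coef0_prod big1 // => i _; rewrite coef_trunc_geom. Qed.

Lemma hcomplete_ord0 N m : (m <= N)%N -> hcomplete N m 0 = x 0 ^+ m.
Proof. by move=> hm; rewrite /hcomplete big_ord1 coef_trunc_geom. Qed.

Lemma hcompleteS N m k : (m <= N)%N ->
  hcomplete N m k.+1 = \sum_(j < m.+1) hcomplete N j k * x k.+1 ^+ (m - j).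
Proof.
move=> hm; rewrite /hcomplete big_ord_recr /= coefM; apply: eq_bigr => j _.
by rewrite coef_trunc_geom // (leq_trans (leq_subr _ _) hm).
Qed.

Lemma hcomplete_rec N m k : (m < N)%N ->
  hcomplete N m.+1 k.+1 = hcomplete N m.+1 k + x k.+1 * hcomplete N m k.+1.
Proof.
move=> hm; have hm' := ltnW hm.
rewrite !hcompleteS // big_ord_recr /= subnn expr0 mulr1 addrC.
congr (_ + _); rewrite mulr_sumr; apply: eq_bigr => j _.
have hj : (j <= m)%N by rewrite -ltnS.
by rewrite (subSn hj) exprS mulrCA.
Qed.

Lemma hcomplete_trunc M N m k : (m <= M)%N -> (m <= N)%N ->
  hcomplete M m k = hcomplete N m k.
Proof.
elim: k m => [|k IH] m hM hN; first by rewrite !hcomplete_ord0.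
rewrite !hcompleteS //; apply: eq_bigr => j _.
have hj : (j <= m)%N by rewrite -ltnS.
by rewrite IH //; [exact: leq_trans hj hM | exact: leq_trans hj hN].
Qed.

Lemma newton_basisS Z k : newton_basis Z k.+1 = newton_basis Z k * (Z - (x k)%:P).
Proof. by rewrite /newton_basis big_ord_recr. Qed.

(* Newton interpolation of Z^n at the nodes x_0, x_1, ...: its divided
   differences are complete homogeneous symmetric polynomials. *)
Lemma newton_expansion N Z n : (n <= N)%N ->
  Z ^+ n = \sum_(k < n.+1) hcomplete N (n - k) k *: newton_basis Z k.
Proof.
elim: n => [|n IH] hn; first by rewrite big_ord1 hcomplete0 scale1r /newton_basis big_ord0.
have hn' := ltnW hn.
have mulZ k : Z * newton_basis Z k = newton_basis Z k.+1 + x k *: newton_basis Z k.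
  by rewrite newton_basisS mulrBr -mul_polyC [_ * Z]mulrC [_ * (x k)%:P]mulrC subrK.
rewrite exprS (IH hn') mulr_sumr.
under eq_bigr do rewrite -scalerAr mulZ scalerDr scalerA.
rewrite big_split /= [X in X + _]big_ord_recr /= subnn hcomplete0.
rewrite [X in _ + X]big_ord_recl /=.
rewrite [RHS]big_ord_recl [in RHS]big_ord_recr /= /bump /=.
rewrite !subn0 subSS subnn hcomplete0 (hcomplete_ord0 hn) (hcomplete_ord0 hn') exprSr.
set A := \sum_(i < n) hcomplete N (n - i) i *: newton_basis Z i.+1.
set B := 1 *: newton_basis Z n.+1.
set C := (x 0 ^+ n * x 0) *: newton_basis Z 0.
rewrite [C + _]addrC addrACA [B + _]addrC addrACA -[RHS]addrA [B + C]addrC; congr (_ + _).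
rewrite /A -big_split /=; apply: eq_bigr => i _.
have hi : (i < n)%N := ltn_ord i.
rewrite -scalerDl subSS -[(n - i)%N](subnSK hi) hcomplete_rec; first by rewrite mulrC.
by rewrite subnSK // (leq_trans (leq_subr _ _) hn').
Qed.

End CompleteHomogeneous.

Section QStirling.
Variables (K : fieldType) (q : K).

(* q^x as a polynomial in [x]_q, since q^x = 1 - (1 - q) [x]_q. *)
Definition qpow_poly : {poly K} := 1 - (1 - q) *: 'X.

Definition s1q_poly (k : nat) : {poly K} :=
  q ^+ 'C(k, 2) *: \prod_(i < k) (q ^- i *: ('X - (qint_nat q i)%:P)).

Lemma s1qE k l : s1q q k l = (s1q_poly k)`_l.
Proof. by []. Qed.

Lemma size_s1q_poly k : (size (s1q_poly k) <= k.+1)%N.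
Proof.
rewrite /s1q_poly (leq_trans (size_scale_leq _ _)) //.
elim: k => [|k IH]; first by rewrite big_ord0 size_poly1.
rewrite big_ord_recr /= (leq_trans (size_polyMleq _ _)) //.
have h2 : (size (q ^- k *: ('X - (qint_nat q k)%:P)) <= 2)%N.
  by rewrite (leq_trans (size_scale_leq _ _)) ?size_XsubC.
move: IH h2; set a := size _; set b := size _; lia.
Qed.

Lemma s1q_eq0 k l : (k < l)%N -> s1q q k l = 0.
Proof. by move=> hkl; rewrite s1qE nth_default // (leq_trans (size_s1q_poly k)). Qed.

(* Expanding the product of the truncated geometric series at the nodes q^i
   indexes its monomials by compositions (l_0, ..., l_k). *)
Lemma sum_compositions_qpow M m k :
  \sum_(t : {ffun 'I_k.+1 -> 'I_M.+1} | (\sum_(i < k.+1) (t i : nat) == m)%N)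
     q ^+ (\sum_(i < k.+1) i * t i)%N = hcomplete (fun i => q ^+ i) M m k.
Proof.
rewrite /hcomplete /trunc_geom bigA_distr_bigA /= coef_sum big_mkcond /=.
apply: eq_bigr => f _.
rewrite scaler_prod prodrXr coefZ coefXn eq_sym.
case: eqP => _; rewrite ?mulr0 ?mulr1 //.
by rewrite -prodrXr; apply: eq_bigr => i _; rewrite -exprM.
Qed.

Lemma coef_qpow_poly_exp n l : (qpow_poly ^+ n)`_l = (q - 1) ^+ l *+ 'C(n, l).
Proof.
have -> : qpow_poly = (q - 1)%:P * 'X + 1 by rewrite /qpow_poly mul_polyC addrC -scaleNr opprB.
rewrite exprD1n coef_sum.
under eq_bigr do rewrite coefMn exprMn -rmorphXn mul_polyC coefZ coefXn.
case: (leqP l n) => hl.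
  rewrite (bigD1 (Ordinal (hl : (l < n.+1)%N))) //= eqxx mulr1 big1 ?addr0 // => i /negbTE hi.
  have -> : (l == i) = false by apply: contraFF hi => /eqP hli; apply/eqP/val_inj.
  by rewrite mulr0 mul0rn.
rewrite bin_small // mulr0n big1 // => i _.
have -> : (l == i) = false by apply/negbTE; rewrite neq_ltn (leq_ltn_trans _ hl) ?orbT // -ltnS.
by rewrite mulr0 mul0rn.
Qed.

Hypotheses (q_neq0 : q != 0) (q_neq1 : q != 1).

Lemma qpow_poly_subC k : qpow_poly - (q ^+ k)%:P = (q - 1) *: ('X - (qint_nat q k)%:P).
Proof.
have hk : (q - 1) * qint_nat q k = q ^+ k - 1.
  by rewrite /qint_nat; field; rewrite subr_eq0 eq_sym.
rewrite scalerBr scale_polyC hk /qpow_poly polyCB polyC1 !scalerBl !scale1r.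
set X1 := (q *: 'X : {poly K}); set Y := ((q ^+ k)%:P : {poly K}).
ring.
Qed.

Lemma newton_basis_qpow_poly k :
  newton_basis (fun i => q ^+ i) qpow_poly k = (q - 1) ^+ k *: s1q_poly k.
Proof.
elim: k => [|k IH]; first by rewrite /newton_basis /s1q_poly !big_ord0 bin0n !expr0 !scale1r.
rewrite newton_basisS IH qpow_poly_subC /s1q_poly big_ord_recr /= binS bin1.
rewrite -scalerAr -!scalerAl -scalerAr !scalerA; congr (_ *: _).
have qk_unit : q ^+ k \is a GRing.unit by rewrite unitfE expf_neq0.
by rewrite exprD -mulrA mulrK // exprS; ring.
Qed.

(* The coefficient of [x]_q^l in the Newton expansion of (q^x)^n. *)
Lemma binomial_s1q_expansion n l : (q - 1) ^+ l *+ 'C(n, l) =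
  \sum_(k < n.+1) hcomplete (fun i => q ^+ i) n (n - k) k * ((q - 1) ^+ k * s1q q k l).
Proof.
rewrite -coef_qpow_poly_exp (newton_expansion (fun i => q ^+ i) _ (leqnn n)) coef_sum.
by apply: eq_bigr => k _; rewrite newton_basis_qpow_poly s1qE !coefZ.
Qed.

Lemma sum_hcomplete_s1q n l :
  \sum_(k < n.+1) hcomplete (fun i => q ^+ i) n (n - k) k / (1 - q) ^+ (n + l - k)
     * s1q q k l * (-1) ^+ k = 'C(n, l)%:R * (-1) ^+ l / (1 - q) ^+ n.
Proof.
have c_neq0 : 1 - q != 0 by rewrite subr_eq0 eq_sym.
have q_sub1 : q - 1 = - (1 - q) by rewrite opprB.
transitivity ((\sum_(k < n.+1) hcomplete (fun i => q ^+ i) n (n - k) k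
                * ((q - 1) ^+ k * s1q q k l)) / (1 - q) ^+ (n + l)); last first.
  rewrite -binomial_s1q_expansion // q_sub1 [(- (1 - q)) ^+ l]exprNn exprD -mulr_natl.
  have : (1 - q) ^+ n != 0 by rewrite expf_neq0.
  have : (1 - q) ^+ l != 0 by rewrite expf_neq0.
  by set A := (1 - q) ^+ n; set B := (1 - q) ^+ l => hB hA; field; rewrite hA hB.
rewrite mulr_suml; apply: eq_bigr => k _.
have hk : (k <= n)%N by rewrite -ltnS.
rewrite [in RHS](_ : (n + l = (n + l - k) + k)%N); last by lia.
rewrite exprD q_sub1 [(- (1 - q)) ^+ k]exprNn.
have : (1 - q) ^+ (n + l - k) != 0 by rewrite expf_neq0.
have : (1 - q) ^+ k != 0 by rewrite expf_neq0.
by set A := (1 - q) ^+ (n + l - k); set B := (1 - q) ^+ k => hB hA; field; rewrite hA hB.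
Qed.

Lemma binomial_sum_stirling_form n Qx :
  \sum_(l < n.+1) ((- Qx) ^+ l *+ 'C(n, l)) / (1 - q) ^+ n * (2 / (1 + q ^+ l)) =
  2 * \sum_(0 <= l < n.+1) \sum_(l <= k < n.+1)
        \sum_(t : {ffun 'I_k.+1 -> 'I_(n - k).+1}
              | (\sum_(i < k.+1) (t i : nat) == n - k)%N)
          q ^+ (\sum_(i < k.+1) i * t i)%N / (1 - q) ^+ (n + l - k)
          * s1q q k l * (-1) ^+ k
          * (Qx ^+ l / (1 + q ^+ l)).
Proof.
rewrite big_mkord mulr_sumr; apply: eq_bigr => l _.
rewrite sumr_nat_dropl => [|k lt_kl]; last first.
  by rewrite big1 // => t _; rewrite s1q_eq0 // mulr0 !mul0r.
under eq_bigr => k _.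
  rewrite -!mulr_suml sum_compositions_qpow (@hcomplete_trunc _ _ (n - k) n) ?leq_subr //.
  over.
rewrite -mulr_suml sum_hcomplete_s1q // [(- Qx) ^+ l]exprNn -mulr_natl.
set A := (1 - q) ^+ n; set B := 1 + q ^+ l.
ring.
Qed.

End QStirling.

Section NonArchimedean.
Variables (R : realType) (K : fieldType) (abs : K -> R) (p : nat).
Hypothesis Ha : padic_abs abs p.

Lemma abs1 : abs 1 = 1.
Proof.
have h := abs_mul Ha 1 1; rewrite mulr1 in h.
have h0 : abs 1 != 0 by apply/eqP => /(abs_eq0 Ha) /eqP; rewrite oner_eq0.
by apply: (mulfI h0); rewrite mulr1 -h.
Qed.

Lemma absN x : abs (- x) = abs x.
Proof.
suff absN1 : abs (-1) = 1 by rewrite -mulN1r (abs_mul Ha) absN1 mul1r.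
have : abs (-1) ^+ 2 == 1 by rewrite expr2 -(abs_mul Ha) mulrNN mulr1 abs1.
rewrite sqrf_eq1 => /orP [/eqP //|/eqP h1].
by have := abs_ge0 Ha (-1); rewrite h1 ler0N1.
Qed.

Lemma absB x y : abs (x - y) = abs (y - x).
Proof. by rewrite -opprB absN. Qed.

Lemma absX x n : abs (x ^+ n) = abs x ^+ n.
Proof. by elim: n => [|n IH]; rewrite ?abs1 // !exprS (abs_mul Ha) IH. Qed.

Lemma absV x : abs (x^-1) = (abs x)^-1.
Proof.
have [->|x_neq0] := eqVneq x 0; first by rewrite invr0 (abs_0 Ha) invr0.
have absx_neq0 : abs x != 0 by apply: contra x_neq0 => /eqP /(abs_eq0 Ha) ->.
by apply: (mulfI absx_neq0); rewrite -(abs_mul Ha) !mulfV // abs1.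
Qed.

Lemma ultra_le x y B : abs x <= B -> abs y <= B -> abs (x + y) <= B.
Proof. by move=> hx hy; apply: le_trans (abs_ultra Ha x y) _; rewrite ge_max hx hy. Qed.

Lemma ultra_lt x y B : abs x < B -> abs y < B -> abs (x + y) < B.
Proof. by move=> hx hy; apply: le_lt_trans (abs_ultra Ha x y) _; rewrite gt_max hx hy. Qed.

Lemma abs_sum (I : Type) (r : seq I) (P : pred I) (F : I -> K) B :
  0 <= B -> (forall i, P i -> abs (F i) <= B) -> abs (\sum_(i <- r | P i) F i) <= B.
Proof.
move=> B_ge0 hF; elim/big_rec: _ => [|i y Pi hy]; first by rewrite (abs_0 Ha).
exact: ultra_le (hF i Pi) hy.
Qed.

Lemma abs_nat n : abs n%:R <= 1.
Proof. by elim: n => [|n IH]; rewrite ?(abs_0 Ha) // mulrS ultra_le ?abs1. Qed.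

Lemma abs_addr_eq x y : abs y < abs x -> abs (x + y) = abs x.
Proof.
move=> hxy; apply/eqP; rewrite eq_le; apply/andP; split; first by rewrite ultra_le // ltW.
have := abs_ultra Ha (x + y) (- y); rewrite addrK absN le_max => /orP [//|h].
by have := lt_le_trans hxy h; rewrite ltxx.
Qed.

Lemma abs_exprB1_le Q c : abs Q <= 1 -> abs (Q ^+ c - 1) <= abs (Q - 1).
Proof.
move=> hQ; rewrite subrX1 (abs_mul Ha) ler_piMr ?(abs_ge0 Ha) //.
by apply: abs_sum => // j _; rewrite absX exprn_ile1 // (abs_ge0 Ha).
Qed.

Lemma cvg_to_unique (v : nat -> K) L L' :
  cvg_to abs v L -> cvg_to abs v L' -> L = L'.
Proof.
move=> cvgL cvgL'; apply/eqP; rewrite -subr_eq0; apply/eqP/(abs_eq0 Ha).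
apply/eqP; rewrite eq_le (abs_ge0 Ha) andbT leNgt; apply/negP => hd.
have [N1 hN1] := cvgL _ hd; have [N2 hN2] := cvgL' _ hd.
suff : abs (L - L') < abs (L - L') by rewrite ltxx.
rewrite {1}(_ : L - L' = (v (maxn N1 N2) - L') + - (v (maxn N1 N2) - L)); last by ring.
by apply: ultra_lt; rewrite ?absN; [apply: hN2; rewrite leq_maxr | apply: hN1; rewrite leq_maxl].
Qed.

Lemma fermionic_integralE (f : padic_int p -> K) L :
  cvg_to abs (fun N => \sum_(y < p ^ N) f (nat_to_Zp p y) * (-1) ^+ y) L ->
  fermionic_integral abs f = L.
Proof.
by move=> cvgL; apply: cvg_to_unique (epsilon_spec (inhabits 0) _ (ex_intro _ L cvgL)) cvgL.
Qed.

Hypotheses (p_prime : prime p) (p_odd : odd p).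

Definition pinv : R := (p%:R)^-1.

Lemma pinv_gt0 : 0 < pinv.
Proof. by rewrite invr_gt0 ltr0n prime_gt0. Qed.

Lemma pinv_lt1 : pinv < 1.
Proof. by rewrite invf_lt1 ?ltr0n ?prime_gt0 // ltr1n prime_gt1. Qed.

Lemma eventually_lt_pinvX c e : 0 <= c -> 0 < e ->
  exists N, forall M, (N <= M)%N -> c * pinv ^+ M < e.
Proof.
move=> c_ge0 e_gt0.
have ce_ge0 : 0 <= c / e by rewrite divr_ge0 // ltW.
exists (Num.Def.archi_bound (c / e)) => M hM; set N := Num.Def.archi_bound _ in hM *.
apply: le_lt_trans (_ : c * pinv ^+ N < e).
  by rewrite ler_wpM2l // ler_wiXn2l // ltW ?pinv_gt0 ?pinv_lt1.
have pN_gt0 : 0 < (p%:R : R) ^+ N by rewrite exprn_gt0 // ltr0n prime_gt0.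
rewrite /pinv exprVn ltr_pdivrMr // -ltr_pdivrMl // mulrC.
apply: lt_trans (archi_boundP ce_ge0) _.
by rewrite -natrX ltr_nat ltn_expl // prime_gt1.
Qed.

(* 1 = 2 ((p + 1) / 2) - p with |p| < 1, so |2| < 1 would force |1| < 1. *)
Lemma abs2 : abs 2 = 1.
Proof.
have hp : p.+1 = (2 * (p./2).+1)%N.
  by have := odd_double_half p; rewrite p_odd -addnn /=; lia.
have e : (1 : K) = 2 * (p./2).+1%:R - p%:R by rewrite -natrM -hp -addn1 natrD addrC addKr.
apply/eqP; rewrite eq_le (abs_nat 2) /= leNgt; apply/negP => lt21.
have : abs (2 * (p./2).+1%:R + - p%:R) < 1.
  apply: ultra_lt; last by rewrite absN (abs_p Ha) pinv_lt1.
  by apply: le_lt_trans lt21; rewrite (abs_mul Ha) ler_piMr ?(abs_ge0 Ha) ?abs_nat.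
by rewrite -e abs1 ltxx.
Qed.

Lemma lt1_of_exprn_lt_pinv d : 0 <= d -> d ^+ p.-1 < pinv -> d < 1.
Proof.
move=> d_ge0 h; rewrite ltNge; apply/negP => d_ge1.
by have := lt_le_trans (lt_le_trans pinv_lt1 (exprn_ege1 p.-1 d_ge1)) (ltW h); rewrite ltxx.
Qed.

(* Expanding a^p = (1 + (a - 1))^p, every middle binomial coefficient is
   divisible by p, and the last term is small by hypothesis. *)
Lemma abs_exprpB1 a : abs (a - 1) ^+ p.-1 < pinv ->
  abs (a ^+ p - 1) <= abs (a - 1) * pinv.
Proof.
set d := abs (a - 1) => hd.
have d_ge0 : 0 <= d by apply: (abs_ge0 Ha).
have d_lt1 : d < 1 by apply: lt1_of_exprn_lt_pinv.
have -> : a ^+ p - 1 = \sum_(i < p) (a - 1) ^+ i.+1 *+ 'C(p, i.+1).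
  by rewrite -{1}(subrK 1 a) exprD1n big_ord_recl /= expr0 bin0 mulr1n addrC addKr.
apply: abs_sum => [|i _]; first by rewrite mulr_ge0 // ltW // pinv_gt0.
have : (i.+1 <= p)%N := ltn_ord i; rewrite leq_eqVlt => /orP [/eqP ip | ip].
  rewrite ip binn mulr1n absX -/d -(prednK (prime_gt0 p_prime)) exprS.
  by rewrite ler_pM // ?exprn_ge0 // ltW.
have /dvdnP [c ->] := prime_dvd_bin (k := i.+1) p_prime ip.
rewrite -mulr_natr natrM !(abs_mul Ha) absX -/d (abs_p Ha) -/pinv mulrA.
apply: ler_wpM2r; first exact: ltW pinv_gt0.
apply: le_trans (_ : d ^+ i.+1 <= d).
  by rewrite ler_piMr ?exprn_ge0 ?abs_nat.
by rewrite exprS ler_piMr // exprn_ile1 // ltW.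
Qed.

Lemma zdig_lt (x : padic_int p) N : (x N < p ^ N)%N.
Proof. by rewrite -(zdigP x N) ltn_pmod // expn_gt0 prime_gt0. Qed.

Lemma zdig_mod (x : padic_int p) N M : (N <= M)%N -> (x M %% p ^ N)%N = x N.
Proof.
elim: M => [|M IH]; first by rewrite leqn0 => /eqP ->; rewrite modn_small // zdig_lt.
rewrite leq_eqVlt => /orP [/eqP <-|lt_NM]; first by rewrite modn_small // zdig_lt.
by rewrite -(IH lt_NM) -(zdigP x M) modn_dvdm // dvdn_exp2l.
Qed.

Variable q : K.
Hypothesis q_close : abs (q - 1) ^+ p.-1 < pinv.

Lemma abs_q_sub1_lt1 : abs (q - 1) < 1.
Proof. exact: lt1_of_exprn_lt_pinv (abs_ge0 Ha _) q_close. Qed.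

Lemma abs_qX m : abs (q ^+ m) = 1.
Proof.
suff absq : abs q = 1 by rewrite absX absq expr1n.
by rewrite -(subrK 1 q) addrC abs_addr_eq abs1 // abs_q_sub1_lt1.
Qed.

(* Each p-th power divides the distance to 1 by p. *)
Lemma abs_qXexpnB1 N : abs (q ^+ (p ^ N) - 1) <= abs (q - 1) * pinv ^+ N.
Proof.
elim: N => [|N IH]; first by rewrite expn0 expr1 expr0 mulr1.
rewrite expnSr exprM exprSr mulrA.
have close_N : abs (q ^+ (p ^ N) - 1) <= abs (q - 1).
  apply: le_trans IH _; rewrite ler_piMr ?(abs_ge0 Ha) //.
  by rewrite exprn_ile1 // ltW // (pinv_gt0, pinv_lt1).
apply: le_trans (abs_exprpB1 _) _.
  by apply: le_lt_trans q_close; rewrite lerXn2r ?nnegrE ?(abs_ge0 Ha).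
by rewrite ler_pM ?(abs_ge0 Ha) // ltW // pinv_gt0.
Qed.

Lemma abs_qX_congr a b N : a = b %[mod p ^ N] ->
  abs (q ^+ a - q ^+ b) <= abs (q - 1) * pinv ^+ N.
Proof.
wlog le_ab : a b / (a <= b)%N => [hwlog|] eab.
  by case: (leqP a b) => [/hwlog|/ltnW /hwlog]; rewrite // absB; apply; rewrite eab.
have /dvdnP [c hc] : (p ^ N %| b - a)%N by rewrite -eqn_mod_dvd // eab.
rewrite absB -(subnK le_ab) hc exprD mulnC exprM -{2}(mul1r (q ^+ a)) -mulrBl.
rewrite (abs_mul Ha) abs_qX mulr1; apply: le_trans (abs_exprB1_le _ _) (abs_qXexpnB1 N).
by rewrite abs_qX.
Qed.

Lemma qpowZp_cvg (x : padic_int p) : cvg_to abs (fun N => q ^+ x N) (qpowZp abs q x).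
Proof.
apply: (epsilon_spec (inhabits 0)); apply: (abs_complete Ha) => e e_gt0.
have [N hN] := eventually_lt_pinvX (abs_ge0 Ha (q - 1)) e_gt0.
exists N => m k hm hk; apply: le_lt_trans (hN N (leqnn N)).
by apply: abs_qX_congr; rewrite !zdig_mod.
Qed.

Lemma abs_qpowZp_le1 (x : padic_int p) : abs (qpowZp abs q x) <= 1.
Proof.
have [N hN] := qpowZp_cvg x ltr01.
rewrite -[qpowZp _ _ _](subrKC (q ^+ x N)) addrC.
by apply: ultra_le; rewrite ?abs_qX // absB ltW ?hN.
Qed.

Lemma qpowZp_add_nat (x : padic_int p) (y : nat) :
  qpowZp abs q (zp_add x (nat_to_Zp p y)) = qpowZp abs q x * q ^+ y.
Proof.
apply: (cvg_to_unique (qpowZp_cvg _)) => e e_gt0 /=.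
have [N1 hN1] := qpowZp_cvg x e_gt0.
have [N2 hN2] := eventually_lt_pinvX (abs_ge0 Ha (q - 1)) e_gt0.
exists (maxn N1 N2) => m; rewrite geq_max => /andP [hm1 hm2].
have -> : q ^+ ((x m + y %% p ^ m) %% p ^ m) - qpowZp abs q x * q ^+ y =
   (q ^+ ((x m + y %% p ^ m) %% p ^ m) - q ^+ (x m + y)) +
   (q ^+ x m - qpowZp abs q x) * q ^+ y by rewrite exprD mulrBl addrA subrK.
apply: ultra_lt; last by rewrite (abs_mul Ha) abs_qX mulr1 hN1.
by apply: le_lt_trans (hN2 m hm2); apply: abs_qX_congr; rewrite modnDmr modn_mod.
Qed.

Lemma abs_1DqX j : abs (1 + q ^+ j) = 1.
Proof.
rewrite (_ : 1 + q ^+ j = 2 + (q ^+ j - 1)); last by ring.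
rewrite abs_addr_eq abs2 //; apply: le_lt_trans abs_q_sub1_lt1.
by rewrite abs_exprB1_le // (abs_qX 1).
Qed.

Lemma oneDqX_neq0 j : 1 + q ^+ j != 0.
Proof. by apply: contra_neq (oner_neq0 R) => h; rewrite -(abs_1DqX j) h (abs_0 Ha). Qed.

Lemma fermionic_partial_sum (x : padic_int p) n N :
  \sum_(y < p ^ N) qint_Zp abs q (zp_add x (nat_to_Zp p y)) ^+ n * (-1) ^+ y =
  \sum_(j < n.+1) (- qpowZp abs q x) ^+ j *+ 'C(n, j) / (1 - q) ^+ n
      * ((1 + (q ^+ j) ^+ (p ^ N)) / (1 + q ^+ j)).
Proof.
set Qx := qpowZp abs q x.
have expand y : qint_Zp abs q (zp_add x (nat_to_Zp p y)) ^+ n * (-1) ^+ y =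
    \sum_(j < n.+1) (- Qx) ^+ j *+ 'C(n, j) / (1 - q) ^+ n * (- q ^+ j) ^+ y.
  rewrite /qint_Zp qpowZp_add_nat expr_div_n addrC -mulNr exprD1n !mulr_suml.
  by apply: eq_bigr => j _; rewrite exprMn -exprM mulnC exprM [(- q ^+ j) ^+ y]exprNn mulrnAl; ring.
under eq_bigr do rewrite expand.
rewrite exchange_big /=; apply: eq_bigr => j _; rewrite -mulr_sumr; congr (_ * _).
apply: (mulfI (oneDqX_neq0 j)); rewrite alternating_geom_sum ?oddX ?p_odd ?orbT //.
by rewrite mulrC divfK // oneDqX_neq0.
Qed.

Lemma abs_fermionic_factor_sub j N :
  abs ((1 + (q ^+ j) ^+ (p ^ N)) / (1 + q ^+ j) - 2 / (1 + q ^+ j))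
    <= abs (q - 1) * pinv ^+ N.
Proof.
rewrite -mulrBl (_ : 1 + _ - 2 = (q ^+ (p ^ N)) ^+ j - 1); last by rewrite exprAC; ring.
rewrite (abs_mul Ha) absV abs_1DqX invr1 mulr1.
by apply: le_trans (abs_exprB1_le _ _) (abs_qXexpnB1 N); rewrite abs_qX.
Qed.

Lemma Enq_binomial (x : padic_int p) n :
  Enq abs q n x = \sum_(j < n.+1) (- qpowZp abs q x) ^+ j *+ 'C(n, j)
      / (1 - q) ^+ n * (2 / (1 + q ^+ j)).
Proof.
apply: fermionic_integralE => e e_gt0.
set C := abs ((1 - q) ^+ n)^-1.
have C_ge0 : 0 <= C by apply: abs_ge0 Ha _.
have [N hN] := eventually_lt_pinvX (mulr_ge0 C_ge0 (abs_ge0 Ha (q - 1))) e_gt0.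
exists N => m hm; rewrite fermionic_partial_sum -sumrB.
apply: le_lt_trans (hN m hm); rewrite -mulrA.
apply: abs_sum => [|j _].
  by rewrite !mulr_ge0 ?exprn_ge0 ?(abs_ge0 Ha) // ltW // pinv_gt0.
have abs_binom_le1 : abs ((- qpowZp abs q x) ^+ j *+ 'C(n, j)) <= 1.
  rewrite -mulr_natr (abs_mul Ha) absX absN mulr_ile1 ?exprn_ge0 ?(abs_ge0 Ha) ?abs_nat //.
  by rewrite exprn_ile1 ?(abs_ge0 Ha) ?abs_qpowZp_le1.
rewrite -mulrBr !(abs_mul Ha) -/C -[X in _ <= X]mul1r mulrA.
apply: ler_pM; rewrite ?mulr_ge0 ?(abs_ge0 Ha) ?abs_fermionic_factor_sub //.
exact: ler_wpM2r.
Qed.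

End NonArchimedean.

Lemma exprn_lt_pinv_of_lt_powR (R : realType) (p : nat) (d : R) :
  (1 < p)%N -> 0 <= d -> d < (p%:R : R) `^ (- ((p - 1)%:R)^-1) -> d ^+ p.-1 < (p%:R)^-1.
Proof.
move=> p_gt1 d_ge0 d_lt; set k : R := (p - 1)%:R.
have k_gt0 : 0 < k by rewrite ltr0n subn_gt0.
have p_ge0 : 0 <= (p%:R : R) by rewrite ler0n.
rewrite -subn1 -powR_mulrn // -/k.
have -> : (p%:R : R)^-1 = ((p%:R : R) `^ (- k^-1)) `^ k.
  by rewrite -powRrM mulNr mulVf ?gt_eqF // powR_inv1.
by apply: gt0_ltr_powR; rewrite ?nnegrE ?powR_ge0.
Qed.

Theorem mainTheorem5 (R : realType) (K : closedFieldType) (abs : K -> R)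
    (p : nat) (q : K) (n : nat) (x : padic_int p) :
  prime p -> odd p -> padic_abs abs p -> q != 1 ->
  abs (1 - q) < (p%:R : R) `^ (- ((p - 1)%:R)^-1) ->
  Enq abs q n x =
  2 * \sum_(0 <= l < n.+1) \sum_(l <= k < n.+1)
        \sum_(t : {ffun 'I_k.+1 -> 'I_(n - k).+1}
              | (\sum_(i < k.+1) (t i : nat) == n - k)%N)
          q ^+ (\sum_(i < k.+1) i * t i)%N / (1 - q) ^+ (n + l - k)
          * s1q q k l * (-1) ^+ k
          * (qpowZp abs q x ^+ l / (1 + q ^+ l)).
Proof.
move=> p_prime p_odd Ha q_neq1 q_near1.
have q_close : abs (q - 1) ^+ p.-1 < pinv R p.
  by apply: exprn_lt_pinv_of_lt_powR; rewrite ?prime_gt1 ?(abs_ge0 Ha) // (absB Ha).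
have q_neq0 : q != 0.
  apply: contra_neq (oner_neq0 R) => q0.
  by rewrite -(abs_qX Ha p_prime q_close 1) q0 expr1 (abs_0 Ha).
by rewrite (Enq_binomial Ha p_prime p_odd q_close) binomial_sum_stirling_form.
Qed.
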